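(* Consider the difference equation $x_k+a_1x_{k-1}+\dots+a_nx_{k-n}=0$, $k\ge n$, with $a_i\in\mathbb R$. There exists an initial condition $x^{(0)}=(x_0,\dots,x_{n-1})$ with $\|x^{(0)}\|_\infty=1$ whose solution satisfies $\max_{k\ge n}|x_k|>1$ if and only if $\sum_{i=1}^n|a_i|>1$. *)

From HB Require Import structures.
From mathcomp Require Import all_boot all_order all_algebra.
Set Implicit Arguments. Unset Strict Implicit. Unset Printing Implicit Defensive.
Import Order.TTheory GRing.Theory Num.Theory.
Local Open Scope ring_scope.

(* x solves x_k + a_1 x_{k-1} + ... + a_n x_{k-n} = 0 for all k >= n.
   Coefficients are 1-indexed: a 1, ..., a n (a 0 is unused). *)
Definition is_solution (R : numDomainType) (n : nat) (a : nat -> R) (x : nat -> R) : Prop :=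
  forall k : nat, (n <= k)%N -> x k + \sum_(1 <= i < n.+1) a i * x (k - i)%N = 0.

Definition init_norm (R : realDomainType) (n : nat) (x : nat -> R) : R :=
  \big[Num.max/0]_(i < n) `|x i|.

(* If [sum |a_i| <= 1], each new term is a combination of earlier terms with
   coefficients of total absolute value at most 1, so by strong induction no
   term exceeds the sup-norm of the initial condition.  Conversely, choosing [x_(n-i) = -sign a_i] makes
   [x_n = sum |a_i| > 1]. *)
From HB Require Import structures.
From mathcomp Require Import all_boot all_order all_algebra.
From mathcomp Require Import zify.
Set Implicit Arguments. Unset Strict Implicit. Unset Printing Implicit Defensive.
Import Order.TTheory GRing.Theory Num.Theory.
Local Open Scope ring_scope.

Lemma solutionE (R : numDomainType) (n : nat) (a x : nat -> R) (k : nat) :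
  is_solution n a x -> (n <= k)%N ->
  x k = - \sum_(1 <= i < n.+1) a i * x (k - i)%N.
Proof. by move=> sol_x /sol_x /eqP; rewrite addr_eq0 => /eqP. Qed.

Section InitNorm.
Variables (R : realDomainType) (n : nat) (x : nat -> R).

Lemma init_norm_ge0 : 0 <= init_norm n x.
Proof. by apply: bigmax_ge_id. Qed.

Lemma le_init_norm (k : nat) : (k < n)%N -> `|x k| <= init_norm n x.
Proof. by move=> lt_kn; exact: (le_bigmax _ (fun i : 'I_n => `|x i|) (Ordinal lt_kn)). Qed.

Lemma init_norm_unit :
  (0 < n)%N -> (forall k, (k < n)%N -> `|x k| = 1) -> init_norm n x = 1.
Proof.
move=> n_gt0 x_unit; apply/eqP; rewrite eq_le; apply/andP; split.
  by apply: bigmax_le => // i _; rewrite x_unit.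
by rewrite -(x_unit 0%N n_gt0) le_init_norm.
Qed.

End InitNorm.

Section RecursiveSolution.
Variables (R : numDomainType) (n : nat) (a init : nat -> R).

Definition next_term (k : nat) (s : seq R) : R :=
  if (k < n)%N then init k else - \sum_(1 <= i < n.+1) a i * nth 0 s (k - i)%N.

(* [prefix k] lists the first [k] terms; carrying it along turns the
   [n]-step recursion into a structural one. *)
Fixpoint prefix (k : nat) : seq R :=
  if k is k'.+1 then rcons (prefix k') (next_term k' (prefix k')) else [::].

Definition rec_solution (k : nat) : R := next_term k (prefix k).

Lemma size_prefix (k : nat) : size (prefix k) = k.
Proof. by elim: k => //= k IHk; rewrite size_rcons IHk. Qed.

Lemma nth_prefix (k j : nat) : (j < k)%N -> nth 0 (prefix k) j = rec_solution j.
Proof.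
elim: k => // k IHk; rewrite ltnS leq_eqVlt => /orP[/eqP->|lt_jk] /=.
  by rewrite nth_rcons size_prefix ltnn eqxx.
by rewrite nth_rcons size_prefix lt_jk IHk.
Qed.

Lemma rec_solution_init (k : nat) : (k < n)%N -> rec_solution k = init k.
Proof. by rewrite /rec_solution /next_term => ->. Qed.

Lemma rec_solution_is_solution : is_solution n a rec_solution.
Proof.
move=> k le_nk; rewrite {1}/rec_solution {1}/next_term ltnNge le_nk /=.
rewrite [X in - X](eq_big_nat _ _ (F2 := fun i => a i * rec_solution (k - i)))
  ?addNr // => i /andP[i_gt0 lt_in].
by rewrite nth_prefix //; lia.
Qed.

End RecursiveSolution.

Lemma solution_bounded_by_init_norm (R : realDomainType) (n : nat) (a x : nat -> R) :
  \sum_(1 <= i < n.+1) `|a i| <= 1 -> is_solution n a x ->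
  forall k, `|x k| <= init_norm n x.
Proof.
move=> sum_le1 sol_x; elim/ltn_ind=> k IHk.
have [lt_kn|le_nk] := ltnP k n; first exact: le_init_norm.
rewrite (solutionE sol_x le_nk) normrN.
apply: le_trans (ler_norm_sum _ _ _) _.
apply: le_trans (_ : \sum_(1 <= i < n.+1) `|a i| * init_norm n x <= _).
  apply: ler_sum_nat => i /andP[i_gt0 lt_in]; rewrite normrM ler_wpM2l //.
  by apply: IHk; lia.
by rewrite -mulr_suml ler_piMl // init_norm_ge0.
Qed.

Lemma mul_neg_sign (R : realDomainType) (c : R) :
  c * (if 0 <= c then -1 else 1) = - `|c|.
Proof.
case: ifPn => [c_ge0|]; first by rewrite mulrN1 ger0_norm.
by rewrite -ltNge => c_lt0; rewrite mulr1 ltr0_norm ?opprK.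
Qed.

Theorem mainTheorem7 (R : realFieldType) (n : nat) (a : nat -> R) :
  (exists x : nat -> R,
      is_solution n a x /\ init_norm n x = 1 /\
      exists k : nat, (n <= k)%N /\ 1 < `|x k|)
  <-> 1 < \sum_(1 <= i < n.+1) `|a i|.
Proof.
split=> [[x [sol_x [norm_x [k [_ x_k_gt1]]]]]|sum_gt1].
  rewrite ltNge; apply/negP => sum_le1.
  by have := solution_bounded_by_init_norm sum_le1 sol_x k; rewrite norm_x leNgt x_k_gt1.
have n_gt0 : (0 < n)%N by move: sum_gt1; case: n => //; rewrite big_geq // ltr10.
pose init j := if 0 <= a (n - j)%N then -1 else 1 : R.
pose x := rec_solution n a init.
have x_init k : (k < n)%N -> `|x k| = 1.
  by move=> lt_kn; rewrite /x rec_solution_init // /init; case: ifP; rewrite ?normrN normr1.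
have sol_x : is_solution n a x by exact: rec_solution_is_solution.
exists x; split=> //; split; first exact: init_norm_unit.
exists n; split=> //; rewrite (solutionE sol_x (leqnn n)).
have -> : \sum_(1 <= i < n.+1) a i * x (n - i)%N = - \sum_(1 <= i < n.+1) `|a i|.
  rewrite -sumrN; apply: eq_big_nat => i /andP[i_gt0 le_in].
  rewrite /x rec_solution_init; last by rewrite ltn_subrL n_gt0 i_gt0.
  by rewrite /init subKn // mul_neg_sign.
by rewrite opprK ger0_norm // (le_trans ler01 (ltW sum_gt1)).
Qed.
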